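(* Let $k$ be a positive integer and $m$ an integer with $1\leq m<k$. If integers $p_k,p_m$ satisfy $p_k>0$ and $p_m\geq p_k+\left\lfloor\frac{k}{m}\right\rfloor-1$, then there exists a connected graph $G$ such that $\psi_k(G)=p_k$ and $\psi_m(G)=p_m$.
   Context: All graphs are finite, simple and nonempty. For a graph $G$ and a positive integer $k$, a $k$-path vertex cover ($k$-PVC) of $G$ is a set $S$ of vertices such that every path on $k$ vertices in $G$ contains at least one vertex of $S$ (if $G$ has no path on $k$ vertices, the empty set is a $k$-PVC). $\psi_k(G)$ denotes the minimum cardinality of a $k$-PVC of $G$. *)

From mathcomp Require Import all_boot.
Set Implicit Arguments. Unset Strict Implicit. Unset Printing Implicit Defensive.

Definition simple_graph (T : finType) (e : rel T) : Prop :=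
  symmetric e /\ irreflexive e.

Definition connected_graph (T : finType) (e : rel T) : Prop :=
  forall x y : T, connect e x y.

Definition is_kpath (T : finType) (e : rel T) (k : nat) (s : seq T) : bool :=
  [&& size s == k, uniq s &
      (if s is x :: p then path e x p else true)].

Definition is_kpvc (T : finType) (e : rel T) (k : nat) (S : {set T}) : bool :=
  [forall t : k.-tuple T, is_kpath e k t ==> has (mem S) t].

(* psi_k(G): minimum cardinality of a k-PVC (default #|T| is never
   strictly below the minimum since setT is a k-PVC for k >= 1). *)
Definition psi (T : finType) (e : rel T) (k : nat) : nat :=
  \big[minn/#|T|]_(S : {set T} | is_kpvc e k S) #|S|.

From mathcomp Require Import all_boot zify.
Set Implicit Arguments. Unset Strict Implicit. Unset Printing Implicit Defensive.

(* Let q = k %/ m and a = p_k + q - 1.  Take a clique of a hubs, a + 1 disjoint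
   (m-1)-cliques ("fragments") completely joined to the hubs, and p_m - a
   further m-cliques, each hanging from hub 0 through one of its vertices.
   Deleting the hubs and the attaching vertices leaves only (m-1)-cliques, and
   the graph contains p_m disjoint m-cliques, so psi_m = p_m.  Deleting p_k hubs
   including hub 0 leaves the hanging cliques of order m < k and a part in which
   every m consecutive vertices of a path contain one of the q - 1 remaining
   hubs, so all its paths have fewer than q m <= k vertices.  Conversely, fewer
   than p_k deleted vertices spare q hubs and q + 1 fragments, which alternate
   into a path on (q + 1) m - 1 >= k vertices. *)

Section Sequences.
Variables (T : eqType) (e : rel T).

Lemma sorted_clique s : uniq s -> {in s &, forall u v, u != v -> e u v} -> sorted e s.
Proof.
move=> uniq_s clique_s; apply: pairwise_sorted.
by apply: (sub_in_pairwise clique_s); rewrite ?all_predT -?uniq_pairwise.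
Qed.

Lemma sorted_cons_all x s : sorted e s -> {in s, forall y, e x y} -> sorted e (x :: s).
Proof. by case: s => //= y s -> /(_ y (mem_head _ _)) ->. Qed.

Lemma sorted_cat_cons s1 x s2 :
  sorted e s1 -> sorted e (x :: s2) -> {in s1, forall y, e y x} -> sorted e (s1 ++ x :: s2).
Proof.
case: s1 => //= y s1 sorted1 sorted2 to_x.
by rewrite cat_path sorted1 /= to_x ?mem_last.
Qed.

Lemma path_class (C : eqType) (P : pred T) (c : T -> C) x s :
  {in P &, forall u v, e u v -> c u = c v} -> all P (x :: s) -> path e x s ->
  all (fun v => c x == c v) s.
Proof.
move=> e_class Ps path_e; apply: (@order_path_min _ [rel u v | c u == c v]).
  by move=> v u w /= /eqP -> /eqP ->.
by apply: (sub_in_path (P := P)) path_e => // u v Pu Pv /= /(e_class _ _ Pu Pv) ->.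
Qed.

Lemma window_count (P : pred T) m s : 0 < m ->
  (forall i, size (take m (drop i s)) = m -> has P (take m (drop i s))) ->
  size s < m * (count P s).+1.
Proof.
move=> m_gt0; elim: {s}_.+1 {-2}s (ltnSn (size s)) => // n IHn s sz_s windows.
have [short|long] := ltnP (size s) m; first by rewrite (leq_trans short) ?leq_pmulr.
have head_hit : 0 < count P (take m s).
  by rewrite -has_count; have := windows 0; rewrite drop0; apply; rewrite size_takel.
have tail_short : size (drop m s) < m * (count P (drop m s)).+1.
  by apply: IHn => [|i]; rewrite ?drop_drop ?size_drop; [lia | apply: windows].
rewrite -(cat_take_drop m s) size_cat count_cat size_takel //; nia.
Qed.

End Sequences.

Lemma geq_bigmin_cond (I : eqType) (r : seq I) (P : pred I) (F : I -> nat) x i :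
  i \in r -> P i -> \big[minn/x]_(j <- r | P j) F j <= F i.
Proof.
elim: r => // j r IHr; rewrite inE big_cons => /predU1P[-> -> | r_i P_i].
  exact: geq_minl.
by case: ifP => _; rewrite ?geq_min IHr ?orbT.
Qed.

Section PathVertexCovers.
Variables (T : finType) (e : rel T).

Lemma psi_min k (S : {set T}) :
  is_kpvc e k S -> (forall S', is_kpvc e k S' -> #|S| <= #|S'|) -> psi e k = #|S|.
Proof.
move=> coverS minS; apply/eqP; rewrite eqn_leq /psi.
rewrite geq_bigmin_cond ?mem_index_enum //=.
elim/big_ind: _ => [|x y ? ?|S' /minS //]; first exact: max_card.
by rewrite leq_min; apply/andP.
Qed.

Lemma kpvc_short_paths k (S : {set T}) :
  (forall s, uniq s -> sorted e s -> ~~ has (mem S) s -> size s < k) -> is_kpvc e k S.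
Proof.
move=> short; apply/forallP => t; apply/implyP => /and3P[/eqP sz_t uniq_t sorted_t].
by apply: contraT => /(short _ uniq_t sorted_t); rewrite sz_t ltnn.
Qed.

Lemma kpvc_long_path k (S : {set T}) s :
  is_kpvc e k S -> uniq s -> sorted e s -> k <= size s -> has (mem S) s.
Proof.
move=> /forallP cover uniq_s sorted_s k_le.
have sz : size (take k s) == k by rewrite size_takel.
have /implyP := cover (Tuple sz); rewrite /is_kpath /= sz take_uniq //.
move=> /(_ (take_sorted _ sorted_s)) /hasP[v /mem_take v_s v_S].
by apply/hasP; exists v.
Qed.

Lemma card_disjoint_kpaths k (I : finType) (p : I -> seq T) (S : {set T}) :
  is_kpvc e k S -> (forall i, is_kpath e k (p i)) ->
  (forall i j v, v \in p i -> v \in p j -> i = j) -> #|I| <= #|S|.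
Proof.
move=> cover kpath disjoint.
have hit i : exists v, (v \in S) && (v \in p i).
  have /and3P[/eqP sz uniq_p sorted_p] := kpath i.
  have /hasP[v pv Sv] := kpvc_long_path cover uniq_p sorted_p (eq_leq (esym sz)).
  by exists v; apply/andP.
pose w i := xchoose (hit i).
have w_inj : injective w.
  move=> i j wij; have /andP[_ wi] := xchooseP (hit i); have /andP[_ wj] := xchooseP (hit j).
  by apply: (disjoint _ _ (w i)); rewrite // wij.
rewrite -cardsT -(card_imset _ w_inj); apply: subset_leq_card.
by apply/subsetP => _ /imsetP[i _ ->]; have /andP[] := xchooseP (hit i).
Qed.

End PathVertexCovers.

Lemma leq_oimset_card (T U : finType) (g : T -> option U) (S : {set T}) (A : {set U}) :
  (forall u, u \in A -> Some u \in g @: S) -> #|A| <= #|S|.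
Proof.
move=> A_sub; have Some_inj : injective (@Some U) by move=> x y [].
rewrite -(card_imset _ Some_inj) (leq_trans _ (leq_imset_card g S)) //.
by apply: subset_leq_card; apply/subsetP => o /imsetP[u /A_sub Su ->].
Qed.

Section Construction.
Variables (a nf ne m1 : nat).

(* Hubs, roots, and leaves grouped into blocks of size [m1]: block [inl f] is a
   fragment, joined to every hub; block [inr g] completes the root [g] to the
   clique of gadget [g], which hangs from hub [0]. *)
Definition vertex := ('I_a + 'I_ne + ('I_nf + 'I_ne) * 'I_m1)%type.

Definition hub i : vertex := inl (inl i).
Definition root g : vertex := inl (inr g).
Definition leaf b j : vertex := inr (b, j).

Definition adj (u v : vertex) : bool :=
  match u, v with
  | inl (inl i), inl (inl j) => i != j
  | inl (inl i), inl (inr _) | inl (inr _), inl (inl i) => val i == 0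
  | inl (inl _), inr (inl _, _) | inr (inl _, _), inl (inl _) => true
  | inl (inr g), inr (inr g', _) | inr (inr g', _), inl (inr g) => g == g'
  | inr (b, x), inr (b', y) => (b == b') && (x != y)
  | _, _ => false
  end.

Lemma adj_sym : symmetric adj.
Proof.
by case=> [[i|g]|[[f|g] x]] [[j|g']|[[f'|g'] y]] //=; rewrite eq_sym // [x == y]eq_sym.
Qed.

Lemma adj_irr : irreflexive adj.
Proof. by case=> [[i|g]|[[f|g] x]] //=; rewrite !eqxx. Qed.

Lemma adj_connected : 0 < a -> connected_graph adj.
Proof.
move=> a_gt0; pose h0 := hub (Ordinal a_gt0).
have to_h0 v : connect adj v h0.
  case: v => [[i|g]|[[f|g] x]]; try by apply: connect1.
  - have [i0|i_neq0] := eqVneq (val i) 0.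
      by rewrite (_ : i = Ordinal a_gt0) //; apply: val_inj.
    by apply: connect1; apply/eqP => i0; rewrite i0 in i_neq0.
  - by apply: (connect_trans (y := root g)); apply: connect1; rewrite /= ?eqxx.
move=> x y; apply: connect_trans (to_h0 x) _.
by rewrite (sym_connect_sym adj_sym).
Qed.

Definition leaves b : seq vertex := [seq leaf b j | j <- enum 'I_m1].

Lemma leaf_in_leaves b j : leaf b j \in leaves b.
Proof. by apply: map_f; rewrite mem_enum. Qed.

Lemma mem_leaves b v : v \in leaves b -> exists j, v = leaf b j.
Proof. by case/mapP => j _ ->; exists j. Qed.

Lemma uniq_leaves b : uniq (leaves b).
Proof. by rewrite map_inj_uniq ?enum_uniq // => j j' [->]. Qed.

Lemma size_leaves b : size (leaves b) = m1.
Proof. by rewrite size_map size_enum_ord. Qed.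

Definition is_leaf (v : vertex) : bool := if v is inr _ then true else false.
Definition block (v : vertex) : option ('I_nf + 'I_ne) :=
  if v is inr (b, _) then Some b else None.

Lemma leaf_path_size s : uniq s -> sorted adj s -> all is_leaf s -> size s <= m1.
Proof.
case: s => // x r uniq_s sorted_s leaf_s.
have same_block : all (fun v => block x == block v) r.
  apply: path_class leaf_s sorted_s.
  by move=> [//|[[f|g] i]] [//|[[f'|g'] j]] _ _ //= /andP[/eqP -> _].
case: x uniq_s leaf_s {sorted_s} same_block => [//|[b i]] uniq_s _ same_block.
rewrite -[X in _ <= X](size_leaves b); apply: uniq_leq_size => // v.
rewrite inE => /predU1P[-> | r_v]; first exact: leaf_in_leaves.
by move: (allP same_block v r_v); case: v r_v => [//|[b' j]] _ /eqP[->]; apply: leaf_in_leaves.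
Qed.

Lemma sorted_leaves b : sorted adj (leaves b).
Proof.
apply: sorted_clique (uniq_leaves b) _ => _ _ /mem_leaves[i ->] /mem_leaves[j ->] neq.
by case: b neq => b neq /=; rewrite eqxx /=; apply: contraNneq neq => ->.
Qed.

Lemma star_kpath v b :
  ~~ is_leaf v -> {in leaves b, forall w, adj v w} -> is_kpath adj m1.+1 (v :: leaves b).
Proof.
move=> nonleaf_v v_adj; apply/and3P; split.
- by rewrite /= (size_leaves b).
- rewrite /= uniq_leaves andbT; apply: contra nonleaf_v => /mem_leaves[j ->] //.
- exact: sorted_cons_all (sorted_leaves b) v_adj.
Qed.

Definition nonleaves : {set vertex} := [set inl x | x : 'I_a + 'I_ne].

Lemma mem_nonleaves v : (v \in nonleaves) = ~~ is_leaf v.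
Proof. by case: v => [x|y]; [apply/imsetP; exists x | apply/negbTE/imsetP => -[]]. Qed.

Lemma card_nonleaves : #|nonleaves| = a + ne.
Proof. by rewrite card_imset ?cardsT ?card_sum ?card_ord // => x y []. Qed.

Lemma nonleaves_kpvc : is_kpvc adj m1.+1 nonleaves.
Proof.
apply: kpvc_short_paths => s uniq_s sorted_s /hasPn avoid.
by rewrite ltnS leaf_path_size //; apply/allP => v /avoid; rewrite /= mem_nonleaves negbK.
Qed.

Section Packing.
Hypothesis a_le_nf : a <= nf.

Definition packing (x : 'I_a + 'I_ne) : seq vertex :=
  match x with
  | inl i => hub i :: leaves (inl (widen_ord a_le_nf i))
  | inr g => root g :: leaves (inr g)
  end.

Lemma packing_kpath x : is_kpath adj m1.+1 (packing x).
Proof.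
by case: x => [i|g]; apply: star_kpath => // _ /mem_leaves[j ->] /=.
Qed.

Lemma packing_disjoint x y v : v \in packing x -> v \in packing y -> x = y.
Proof.
case: x y => [i|g] [i'|g'] /=; rewrite !inE.
all: case/predU1P => [->|/mem_leaves[j ->]]; case/predU1P => [|/mem_leaves[j']] //.
- by case=> ->.
- by case=> /val_inj ->.
- by case=> ->.
- by case=> ->.
Qed.

Lemma psi_adj_small : psi adj m1.+1 = a + ne.
Proof.
rewrite -card_nonleaves; apply: psi_min nonleaves_kpvc _ => S cover.
have -> : #|nonleaves| = #|{: 'I_a + 'I_ne}| by rewrite card_nonleaves card_sum !card_ord.
exact: card_disjoint_kpaths cover packing_kpath packing_disjoint.
Qed.

End Packing.

Fixpoint chain (f : 'I_nf) (hfs : seq ('I_a * 'I_nf)) : seq vertex :=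
  leaves (inl f) ++ if hfs is (h, f') :: hfs' then hub h :: chain f' hfs' else [::].

Lemma size_chain f hfs : size (chain f hfs) = m1 + size hfs * m1.+1.
Proof.
elim: hfs f => [|[h f'] hfs IHhfs] f /=; rewrite size_cat (size_leaves (inl f)) //= IHhfs.
by rewrite mulSn addnCA addnA addSn.
Qed.

Lemma mem_chain f hfs v : v \in chain f hfs ->
  (exists2 h, h \in unzip1 hfs & v = hub h) \/
  (exists2 f', f' \in f :: unzip2 hfs & exists j, v = leaf (inl f') j).
Proof.
elim: hfs f => [|[h f'] hfs IHhfs] f /=; rewrite mem_cat ?orbF.
  by case/mem_leaves=> j ->; right; exists f; rewrite ?mem_head //; exists j.
case/orP=> [/mem_leaves[j ->]|]; first by right; exists f; rewrite ?mem_head //; exists j.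
rewrite inE => /predU1P[->|/IHhfs[[h' h'_in ->]|[f'' f''_in leaf_v]]].
- by left; exists h; rewrite ?mem_head.
- by left; exists h'; rewrite // inE h'_in orbT.
- by right; exists f''; rewrite // inE f''_in orbT.
Qed.

Lemma uniq_chain f hfs : uniq (unzip1 hfs) -> uniq (f :: unzip2 hfs) -> uniq (chain f hfs).
Proof.
elim: hfs f => [|[h f'] hfs IHhfs] f /=; first by rewrite cats0 uniq_leaves.
move=> /andP[h_new uniq_h] /andP[f_new uniq_f].
rewrite cat_uniq uniq_leaves /= IHhfs // andbT.
have -> /= : hub h \notin chain f' hfs.
  by apply/negP => /mem_chain[[h' h'_in [eq_h]]|[? _ [? //]]]; rewrite eq_h h'_in in h_new.
rewrite andbT negb_or; apply/andP; split; first by apply/negP => /mem_leaves[].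
apply/hasPn => v /mem_chain[[h' _ ->]|[f'' f''_in [j ->]]]; apply/negP => /mem_leaves[j'] //.
by case=> eq_f; rewrite -eq_f f''_in in f_new.
Qed.

Lemma adj_hub_chain h f hfs : h \notin unzip1 hfs -> {in chain f hfs, forall v, adj (hub h) v}.
Proof.
move=> h_new v /mem_chain[[h' h'_in ->]|[f' _ [j ->]]] //=.
by apply: contraNneq h_new => ->.
Qed.

Lemma sorted_chain f hfs : uniq (unzip1 hfs) -> sorted adj (chain f hfs).
Proof.
elim: hfs f => [|[h f'] hfs IHhfs] f /=; first by rewrite cats0 sorted_leaves.
move=> /andP[h_new uniq_h]; apply: sorted_cat_cons; first exact: sorted_leaves.
  exact: sorted_cons_all (IHhfs _ uniq_h) (adj_hub_chain h_new).
by move=> _ /mem_leaves[j ->].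
Qed.

Lemma long_path_avoiding (S : {set vertex}) q :
  q <= #|~: [set i | hub i \in S]| ->
  q < #|~: [set f | [exists j, leaf (inl f) j \in S]]| ->
  exists s, [/\ uniq s, sorted adj s, size s = m1 + q * m1.+1 & ~~ has (mem S) s].
Proof.
set H := ~: _; set F := ~: _ => q_le_H q_lt_F.
case E: (enum F) => [|f fs]; first by move: q_lt_F; rewrite cardE E.
have /andP[f_new uniq_fs] : uniq (f :: fs) by rewrite -E enum_uniq.
have size_fs : q <= size fs by move: q_lt_F; rewrite cardE E.
pose hfs := zip (take q (enum H)) (take q fs).
have size_hs : size (take q (enum H)) = q by rewrite size_takel // -cardE.
have size_fs' : size (take q fs) = q by rewrite size_takel.
have hs_eq : unzip1 hfs = take q (enum H) by rewrite unzip1_zip ?size_hs ?size_fs'.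
have fs_eq : unzip2 hfs = take q fs by rewrite unzip2_zip ?size_hs ?size_fs'.
exists (chain f hfs); split.
- rewrite uniq_chain ?hs_eq ?fs_eq ?take_uniq ?enum_uniq //= take_uniq // andbT.
  by apply: contra f_new => /mem_take.
- by rewrite sorted_chain // hs_eq take_uniq ?enum_uniq.
- by rewrite size_chain size_zip size_hs size_fs' minnn.
apply/hasPn => v /mem_chain[[h h_in ->]|[f' f'_in [j ->]]].
  by rewrite hs_eq in h_in; move: (mem_take h_in); rewrite mem_enum !inE.
have : f' \in enum F.
  by rewrite E; move: f'_in; rewrite fs_eq !inE => /predU1P[->|/mem_take->]; rewrite ?eqxx ?orbT.
by rewrite mem_enum !inE negb_exists => /forallP.
Qed.

Definition is_hub (v : vertex) : bool := if v is inl (inl _) then true else false.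

Definition gadget (v : vertex) : option 'I_ne :=
  match v with inl (inr g) | inr (inr g, _) => Some g | _ => None end.

Section LowHubs.
Variable pk : nat.
Hypotheses (pk_gt0 : 0 < pk) (pk_le_a : pk <= a).

Definition low_hubs : {set vertex} := [set hub (widen_ord pk_le_a i) | i : 'I_pk].

Lemma card_low_hubs : #|low_hubs| = pk.
Proof. by rewrite card_imset ?cardsT ?card_ord // => i j [/val_inj]. Qed.

Lemma hub_notin_low_hubs i : hub i \notin low_hubs -> pk <= i.
Proof.
rewrite leqNgt; apply: contra => i_lt; apply/imsetP; exists (Ordinal i_lt) => //.
by congr hub; apply: val_inj.
Qed.

Lemma adj_gadget u v : u \notin low_hubs -> v \notin low_hubs -> adj u v -> gadget u = gadget v.
Proof.
case: u => [[i|g]|[[f|g] x]]; case: v => [[j|g']|[[f'|g'] y]] //=.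
- by move=> /hub_notin_low_hubs + _ /eqP i0; rewrite i0 leqNgt pk_gt0.
- by move=> _ /hub_notin_low_hubs + /eqP j0; rewrite j0 leqNgt pk_gt0.
- by move=> _ _ /eqP ->.
- by move=> _ _ /eqP ->.
- by move=> _ _ /andP[/eqP[->] _].
Qed.

Lemma gadget_size g s : uniq s -> all (fun v => gadget v == Some g) s -> size s <= m1.+1.
Proof.
move=> uniq_s /allP gadget_s.
have <- : size (root g :: leaves (inr g)) = m1.+1 by rewrite /= (size_leaves (inr g)).
apply: uniq_leq_size uniq_s _ => v /gadget_s; rewrite inE.
by case: v => [[i|g']|[[f|g'] j]] //= /eqP[->]; rewrite ?eqxx ?leaf_in_leaves ?orbT.
Qed.

Lemma count_hubs s : uniq s -> ~~ has (mem low_hubs) s -> count is_hub s <= a - pk.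
Proof.
move=> uniq_s /hasPn avoid; pose hubs := [set hub i | i : 'I_a].
have low_sub : low_hubs \subset hubs by apply/subsetP => _ /imsetP[i _ ->]; apply: imset_f.
rewrite -size_filter -(card_uniqP _) ?filter_uniq //.
apply: (@leq_trans #|hubs :\: low_hubs|).
  apply: subset_leq_card; apply/subsetP => v; rewrite mem_filter => /andP[hub_v s_v].
  rewrite inE avoid //=; case: v hub_v {s_v} => [[i|]|] //= _; exact: imset_f.
by rewrite cardsD (setIidPr low_sub) card_low_hubs card_imset ?cardsT ?card_ord // => i j [].
Qed.

Lemma low_hubs_kpvc k : m1.+1 < k -> (a - pk).+1 * m1.+1 <= k -> is_kpvc adj k low_hubs.
Proof.
move=> m_lt_k qm_le_k; apply: kpvc_short_paths => -[|x s] uniq_s sorted_s avoid.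
  exact: ltn_trans m_lt_k.
have free : all [pred v | v \notin low_hubs] (x :: s) by apply/allP => v /(hasPn avoid).
have := path_class (c := gadget) (fun u v u_free v_free => adj_gadget u_free v_free) free sorted_s.
case gx: (gadget x) => [g|] same_gadget.
  apply: leq_ltn_trans (gadget_size (g := g) uniq_s _) m_lt_k.
  by rewrite /= gx eqxx; apply: sub_all same_gadget => v /eqP <-.
suff windows i : size (take m1.+1 (drop i (x :: s))) = m1.+1 ->
    has is_hub (take m1.+1 (drop i (x :: s))).
  apply: leq_trans (window_count (ltn0Sn m1) windows) (leq_trans _ qm_le_k).
  by rewrite mulnC leq_mul2r ltnS count_hubs.
set w := take _ _ => size_w; apply: contraT => no_hub.
have w_sub : {subset w <= x :: s} by move=> v /mem_take /mem_drop.
suff : size w <= m1 by rewrite size_w ltnn.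
apply: leaf_path_size; rewrite ?take_uniq ?drop_uniq ?take_sorted ?drop_sorted //.
apply/allP => v w_v; have /= := hasPn no_hub v w_v.
have : gadget v = None.
  by move: w_v => /w_sub; rewrite inE => /predU1P[->|/(allP same_gadget)/eqP <-].
by case: v {w_v} => [[h|g]|[[f|g] j]].
Qed.

Lemma low_hubs_min k (S : {set vertex}) :
  a < nf -> k <= m1 + (a - pk).+1 * m1.+1 -> is_kpvc adj k S -> pk <= #|S|.
Proof.
move=> a_lt_nf k_le cover; rewrite leqNgt; apply/negP => small.
have touched_hubs : #|[set i | hub i \in S]| <= #|S|.
  apply: (@leq_oimset_card _ _ (fun v => if v is inl (inl i) then Some i else None)) => i.
  by rewrite inE => Si; apply/imsetP; exists (hub i).
have touched_frags : #|[set f | [exists j, leaf (inl f) j \in S]]| <= #|S|.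
  apply: (@leq_oimset_card _ _ (fun v => if v is inr (inl f, _) then Some f else None)) => f.
  by rewrite inE => /existsP[j Sj]; apply/imsetP; exists (leaf (inl f) j).
have free_hubs : (a - pk).+1 <= #|~: [set i | hub i \in S]|.
  by rewrite cardsCs setCK card_ord; lia.
have free_frags : (a - pk).+1 < #|~: [set f | [exists j, leaf (inl f) j \in S]]|.
  by rewrite cardsCs setCK card_ord; lia.
have [s [uniq_s sorted_s size_s]] := long_path_avoiding free_hubs free_frags.
by move=> /negP; apply; apply: (kpvc_long_path cover uniq_s sorted_s); rewrite size_s.
Qed.

Lemma psi_adj_large k : a < nf -> m1.+1 < k ->
  (a - pk).+1 * m1.+1 <= k -> k <= m1 + (a - pk).+1 * m1.+1 -> psi adj k = pk.
Proof.
move=> a_lt_nf m_lt_k qm_le_k k_le; rewrite -card_low_hubs.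
apply: psi_min (low_hubs_kpvc m_lt_k qm_le_k) _ => S cover.
by rewrite card_low_hubs; apply: low_hubs_min cover.
Qed.

End LowHubs.

End Construction.

Theorem mainTheorem6 (k m pk pm : nat) :
  0 < k -> 1 <= m -> m < k -> 0 < pk ->
  pk + k %/ m - 1 <= pm ->
  exists (T : finType) (e : rel T),
    [/\ 0 < #|T|, simple_graph e, connected_graph e,
        psi e k = pk & psi e m = pm].
Proof.
case: m => // m1 k_gt0 _ m_lt_k pk_gt0 pm_ge; set q := k %/ m1.+1 in pm_ge.
have q_gt0 : 0 < q by rewrite divn_gt0 // ltnW.
have qm_le_k : q * m1.+1 <= k := leq_divM k m1.+1.
have k_lt : k < q * m1.+1 + m1.+1 by rewrite {1}(divn_eq k m1.+1) ltn_add2l ltn_pmod.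
set a := pk + q - 1; have a_gt0 : 0 < a by lia.
have q_eq : (a - pk).+1 = q by lia.
exists (vertex a a.+1 (pm - a) m1), (@adj a a.+1 (pm - a) m1); split.
- by rewrite /vertex !card_sum card_prod !card_ord; lia.
- by split; [exact: adj_sym | exact: adj_irr].
- exact: adj_connected.
- by apply: psi_adj_large; rewrite ?q_eq //; lia.
- by rewrite psi_adj_small //; lia.
Qed.
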